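(* For every finite graph $G$, the graph $\mathcal{I}^1_{\mathrm{AR}}(G)$ admits a layering.
   Context: $\mathcal{I}^1_{\mathrm{AR}}(G)$ is the graph whose vertices are the nonempty independent sets of $G$, two being adjacent iff their symmetric difference has exactly one element. A layering of a graph $H$ is a partition of $V(H)$ into an ordered sequence of parts (layers) $V_1,\dots,V_p$ such that: (1) each layer is an independent set of $H$; (2) every edge of $H$ joins vertices in consecutive layers $V_i,V_{i+1}$; (3) for $2\le i\le p$, each vertex of $V_i$ has exactly $i$ neighbours in $V_{i-1}$; (4) for $1\le i\le p$, any two vertices of $V_i$ have at most one common neighbour in $V_{i-1}$ and at most one common neighbour in $V_{i+1}$. *)

From mathcomp Require Import all_boot.
Set Implicit Arguments. Unset Strict Implicit. Unset Printing Implicit Defensive.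

(* A finite simple graph G: vertex type T : finType, adjacency e : rel T
   (assumed symmetric and irreflexive in the theorem). *)

Definition independent (T : finType) (e : rel T) (A : {set T}) : bool :=
  [forall x in A, forall y in A, ~~ e x y].

Definition IAR_vertices (T : finType) (e : rel T) : {set {set T}} :=
  [set A : {set T} | (A != set0) && independent e A].

Definition IAR_adj (T : finType) : rel {set T} :=
  fun A B => #|(A :\: B) :|: (B :\: A)| == 1.

(* A layering of the graph H = (V, adj) (adjacency restricted to V), given as
   a number of layers p and a layer map L : layer V_i = [set v in V | L v == i],
   for 1 <= i <= p. The layers form an ordered partition of V into nonempty parts. *)
Definition layering (U : finType) (V : {set U}) (adj : rel U)
    (p : nat) (L : U -> nat) : Prop :=
      (forall v, v \in V -> 1 <= L v <= p) /\
      (forall i, 1 <= i <= p -> exists v, v \in V /\ L v = i) /\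
      (forall u v, u \in V -> v \in V -> adj u v -> L u <> L v) /\
      (forall u v, u \in V -> v \in V -> adj u v ->
         L v = (L u).+1 \/ L u = (L v).+1) /\
      (forall v, v \in V -> 2 <= L v ->
         #|[set w in V | adj v w && (L w == (L v).-1)]| = L v) /\
      (forall u v, u \in V -> v \in V -> u != v -> L u = L v ->
         #|[set w in V | [&& adj u w, adj v w & L w == (L u).-1]]| <= 1 /\
         #|[set w in V | [&& adj u w, adj v w & L w == (L u).+1]]| <= 1).

From mathcomp Require Import all_boot zify.
Set Implicit Arguments. Unset Strict Implicit. Unset Printing Implicit Defensive.

(* The layers are the cardinalities: V_i is the set of independent sets of
   size i, and p is the independence number.  Two sets are adjacent iff one is
   obtained from the other by adding one element, so edges join consecutive
   layers; the lower neighbours of A are the i sets A \ {x}, x in A; and two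
   distinct sets of the same size can only have their intersection as a common
   lower neighbour and their union as a common upper neighbour. *)

Section FinsetFacts.
Variable T : finType.
Implicit Types A B C : {set T}.

Lemma subset_card_exists A k : k <= #|A| -> exists2 B : {set T}, B \subset A & #|B| = k.
Proof.
move=> /card_geqP[s [uniq_s size_s sub_sA]].
exists [set x in s]; first by apply/subsetP => x; rewrite inE; exact: sub_sA.
by rewrite cardsE (card_uniqP uniq_s).
Qed.

Lemma subset_cardSn_setD1 A B :
  B \subset A -> #|A| = #|B|.+1 -> exists2 x, x \in A & B = A :\ x.
Proof.
move=> sBA cardA.
have /cards1P[x defAB] : #|A :\: B| == 1 by rewrite cardsDS // cardA subSnn.
have /setDP[xA xNB] : x \in A :\: B by rewrite defAB set11.
exists x => //; move: cardA; rewrite (cardsD1 x A) xA add1n => -[card_Ax].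
apply/eqP; rewrite eqEcard card_Ax leqnn andbT; apply/subsetP => y yB.
rewrite !inE (subsetP sBA y yB) andbT; apply: contraNneq xNB => <-; exact: yB.
Qed.

Lemma setD1_inj A : {in A &, injective (fun x => A :\ x)}.
Proof.
move=> x y _ yA eqxy; apply/eqP; apply: contraT => neqxy.
have : y \in A :\ x by rewrite !inE eq_sym neqxy.
by rewrite eqxy !inE eqxx.
Qed.

Lemma setI_eq_of_subsets A B C :
  #|A| = #|B| -> A != B -> C \subset A -> C \subset B -> #|A| = #|C|.+1 ->
  C = A :&: B.
Proof.
move=> cardAB neqAB sCA sCB cardAC; apply/eqP; rewrite eqEcard subsetI sCA sCB /=.
have : #|A :&: B| < #|A|.
  rewrite ltnNge; apply: contra neqAB => leA.
  have /eqP/setIidPl sAB : A :&: B == A by rewrite eqEcard subsetIl leA.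
  by rewrite eqEcard sAB cardAB /=.
lia.
Qed.

Lemma setU_eq_of_supsets A B C :
  #|A| = #|B| -> A != B -> A \subset C -> B \subset C -> #|C| = #|A|.+1 ->
  C = A :|: B.
Proof.
move=> cardAB neqAB sAC sBC cardCA; apply/eqP; rewrite eq_sym eqEcard subUset sAC sBC /=.
have : #|A| < #|A :|: B|.
  rewrite ltnNge; apply: contra neqAB => leA.
  have /eqP/esym/setUidPl sBA : A == A :|: B by rewrite eqEcard subsetUl leA.
  by rewrite eq_sym eqEcard sBA cardAB /=.
lia.
Qed.

End FinsetFacts.

Lemma cards_le1_const (U : finType) (S : {set U}) c :
  (forall w, w \in S -> w = c) -> #|S| <= 1.
Proof. by move=> constS; apply/card_le1_eqP => w1 w2 /constS -> /constS ->. Qed.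

Section IndependenceComplex.
Variables (T : finType) (e : rel T).
Implicit Types A B u v w : {set T}.
Local Notation V := (IAR_vertices e).

Lemma IAR_adj_subset A B : IAR_adj A B ->
  (A \subset B /\ #|B| = #|A|.+1) \/ (B \subset A /\ #|A| = #|B|.+1).
Proof.
move/eqP; rewrite cardsU.
have -> : (A :\: B) :&: (B :\: A) = set0.
  by apply/setP => x; rewrite !inE; case: (x \in A); case: (x \in B).
rewrite cards0 subn0 => card_symdiff.
have := cardsID B A; have := cardsID A B; rewrite setIC.
case cardAB: #|A :\: B| => [|k] cardA cardB.
- by left; rewrite -setD_eq0 -cards_eq0 cardAB; split=> //; lia.
- have cardBA : #|B :\: A| = 0 by lia.
  by right; rewrite -setD_eq0 -cards_eq0 cardBA; split=> //; lia.
Qed.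

Lemma IAR_adj_card A B : IAR_adj A B -> #|B| = #|A|.+1 \/ #|A| = #|B|.+1.
Proof. by case/IAR_adj_subset => [[_ ->]|[_ ->]]; [left|right]. Qed.

Lemma IAR_adj_setD1 A x : x \in A -> IAR_adj A (A :\ x).
Proof.
move=> xA; rewrite /IAR_adj.
have -> : (A :\: (A :\ x)) :|: ((A :\ x) :\: A) = [set x].
  apply/setP => y; rewrite !inE.
  by case: (eqVneq y x) => [->|]; [rewrite xA | case: (y \in A)].
by rewrite cards1.
Qed.

Lemma independentS A B : B \subset A -> independent e A -> independent e B.
Proof.
move=> sBA /forall_inP indA; apply/forall_inP => x xB; apply/forall_inP => y yB.
exact: (forall_inP (indA x (subsetP sBA x xB)) y (subsetP sBA y yB)).
Qed.

Lemma IAR_verticesS A B : A \in V -> B \subset A -> B != set0 -> B \in V.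
Proof.
by rewrite !inE => /andP[_ indA] sBA ->; rewrite (independentS sBA indA).
Qed.

Lemma IAR_lower_neighbours v : v \in V -> 2 <= #|v| ->
  [set w in V | IAR_adj v w && (#|w| == #|v|.-1)] = [set v :\ x | x in v].
Proof.
move=> vV card_v; apply/setP => w; rewrite inE; apply/idP/imsetP.
- case/and3P=> _ /IAR_adj_subset[[_ ->]|[swv card_vw]] /eqP card_w; first lia.
  by have [x xv ->] := subset_cardSn_setD1 swv card_vw; exists x.
- case=> x xv ->; have := cardsD1 x v; rewrite xv => card_vx.
  rewrite IAR_adj_setD1 // (IAR_verticesS vV (subsetDl v [set x])) /=; last first.
    by rewrite -card_gt0; lia.
  by apply/eqP; lia.
Qed.

Lemma card_IAR_lower_neighbours v : v \in V -> 2 <= #|v| ->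
  #|[set w in V | IAR_adj v w && (#|w| == #|v|.-1)]| = #|v|.
Proof.
by move=> vV card_v; rewrite IAR_lower_neighbours // card_in_imset //; apply: setD1_inj.
Qed.

Lemma IAR_common_lower_neighbour u v w :
  #|u| = #|v| -> u != v -> IAR_adj u w -> IAR_adj v w -> #|w| = #|u|.-1 ->
  w = u :&: v.
Proof.
move=> card_uv neq_uv /IAR_adj_subset adj_u /IAR_adj_subset adj_v card_w.
have [swu card_uw] : w \subset u /\ #|u| = #|w|.+1 by case: adj_u => [[]|] //; lia.
have [swv _] : w \subset v /\ #|v| = #|w|.+1 by case: adj_v => [[]|] //; lia.
exact: setI_eq_of_subsets.
Qed.

Lemma IAR_common_upper_neighbour u v w :
  #|u| = #|v| -> u != v -> IAR_adj u w -> IAR_adj v w -> #|w| = #|u|.+1 ->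
  w = u :|: v.
Proof.
move=> card_uv neq_uv /IAR_adj_subset adj_u /IAR_adj_subset adj_v card_w.
have suw : u \subset w by case: adj_u => [[]|[]] //; lia.
have svw : v \subset w by case: adj_v => [[]|[]] //; lia.
exact: setU_eq_of_supsets.
Qed.

Lemma IAR_layer_range v : v \in V -> 1 <= #|v| <= \max_(A in V) #|A|.
Proof.
move=> vV; rewrite (@leq_bigmax_cond _ (mem V) (fun A => #|A|) v vV) andbT.
by move: vV; rewrite inE card_gt0 => /andP[].
Qed.

Lemma IAR_layer_nonempty i :
  1 <= i <= \max_(A in V) #|A| -> exists A, A \in V /\ #|A| = i.
Proof.
case/andP=> i_gt0 le_i_max.
have V_gt0 : 0 < #|V|.
  rewrite card_gt0; apply: contraTneq le_i_max => ->.
  by rewrite big_set0 -ltnNge.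
have [A AV max_A] := eq_bigmax_cond (fun A : {set T} => #|A|) V_gt0.
rewrite max_A in le_i_max; have [B sBA card_B] := subset_card_exists le_i_max; exists B; split=> //.
by rewrite (IAR_verticesS AV sBA) // -card_gt0 card_B.
Qed.

End IndependenceComplex.

Theorem lemma4p3 (T : finType) (e : rel T)
    (e_sym : symmetric e) (e_irr : irreflexive e) :
  exists (p : nat) (L : {set T} -> nat),
    layering (IAR_vertices e) (@IAR_adj T) p L.
Proof.
exists (\max_(A in IAR_vertices e) #|A|), (fun A : {set T} => #|A|).
split; [|split; [|split; [|split; [|split]]]].
- exact: IAR_layer_range.
- exact: IAR_layer_nonempty.
- by move=> u v _ _ /IAR_adj_card; lia.
- by move=> u v _ _ /IAR_adj_card.
- exact: card_IAR_lower_neighbours.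
- move=> u v _ _ neq_uv card_uv; split; apply: cards_le1_const => w;
    rewrite inE => /and4P[_ adj_u adj_v /eqP card_w].
  + exact: IAR_common_lower_neighbour card_uv neq_uv adj_u adj_v card_w.
  + exact: IAR_common_upper_neighbour card_uv neq_uv adj_u adj_v card_w.
Qed.
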